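(* Let $\mathcal{G}=(G,o,R_1,\ldots,R_n)$ be a functional Menger system of rank $n$ and let $H$ be a nonempty subset of $G$. Then $H$ is a stabilizer of $\mathcal{G}$ if and only if $H$ is a quasi-stable, $l$-unitary normal $v$-complex such that $R_iH\subseteq H$ for every $i\in\{1,\ldots,n\}$ and for all $x,y,u\in G$, $\bar w\in G^n$, $i\in\{1,\ldots,n\}$: if $x=y[R_1x\ldots R_nx]\in C_H[H]$ and $u[\bar w\,|_iy]\in H$, then $u[\bar w\,|_ix]\in H$, where the prefix $u[\bar w\,|_i\ ]$ is also allowed to be empty (i.e. the implication is also required with $u[\bar w\,|_iy]$ replaced by $y$ and $u[\bar w\,|_ix]$ by $x$).
   Context: A functional Menger system of rank $n$ is a nonempty set $G$ with an $(n+1)$-ary operation $o\colon(x_0,x_1,\ldots,x_n)\mapsto x_0[x_1\ldots x_n]$ and unary operations $R_1,\ldots,R_n$ satisfying, for all $i,k\in\{1,\ldots,n\}$ and all elements: (A1) $x[y_1\ldots y_n][z_1\ldots z_n]=x[y_1[z_1\ldots z_n]\ldots y_n[z_1\ldots z_n]]$; (A2) $x[R_1x\ldots R_nx]=x$; (A3) $x[\bar u\,|_iz][R_1y\ldots R_ny]=x[\bar u\,|_iz[R_1y\ldots R_ny]]$; (A4) $R_ix[R_1y\ldots R_ny]=(R_ix)[R_1y\ldots R_ny]$; (A5) $x[R_1y\ldots R_ny][R_1z\ldots R_nz]=x[R_1z\ldots R_nz][R_1y\ldots R_ny]$; (A6) $R_ix[y_1\ldots y_n]=R_i(R_kx)[y_1\ldots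 y_n]$; (A7) $(R_ix)[y_1\ldots y_n]=y_i[R_1(x[y_1\ldots y_n])\ldots R_n(x[y_1\ldots y_n])]$. Here $x[\bar u\,|_iz]$ denotes $x[u_1\ldots u_{i-1}\,z\,u_{i+1}\ldots u_n]$, and $R_ix[\ldots]$ means $R_i(x[\ldots])$. For a set $A$, $\mathcal F(A^n,A)$ is the set of partial maps $A^n\to A$. The Menger composition $f[g_1\ldots g_n]$ is the partial function $\bar a\mapsto f(g_1(\bar a),\ldots,g_n(\bar a))$ (defined exactly when the right side is defined), and $\mathcal R_if$ is the partial function with the same domain as $f$ given by $(a_1,\ldots,a_n)\mapsto a_i$. A representation of $\mathcal G$ by $n$-place functions on a set $A$ is a map $P\colon G\to\mathcal F(A^n,A)$ with $P(x[y_1\ldots y_n])=P(x)[P(y_1)\ldots P(y_n)]$ and $P(R_ix)=\mathcal R_iP(x)$. A nonempty $H\subseteq G$ is a stabilizer of $\mathcal G$ if there exist such a representation $P$ on some set $A$ and a point $a\in A$ with $H=\{g\in G: P(g)(a,\ldots,a)=a\}$. $T_n(G)$ is the smallest set of maps $G\to G$ containing the identity and closed under $t\mapsto (x\mapsto a[\bar b\,|_it(x)])$ and $t\mapsto(x\mapsto R_it(x))$ for all $a\in G$, $\bar b\in G^n$, $i$. A nonempty $H\subseteq G$ is quasi-stable if $x\in H\Rightarrow x[x\ldots x]\in H$; $l$-unitary if $x[y\ldots y]\in H$ and $y\in H$ imply $x\in H$; a normal $v$-complex if $x,y\in H$ and $t(x)\in H$ imply $t(y)\in H$ for all $x,y\in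 G$, $t\in T_n(G)$. Write $x\le y$ iff $x=y[R_1x\ldots R_nx]$, and $x\sqsubset y$ iff $R_1x\le R_1y$ (equivalently $x[R_1y\ldots R_ny]=x$). For $X\subseteq G$, let $C_H(X)$ be the set of all $c\in G$ for which there exist $a,b\in G$ and $t\in T_n(G)$ with ($a\le b$ or $a,b\in H$), $t(a)[R_1c\ldots R_nc]=t(a)$, $a\in X$ and $t(b)\in X$. Put $C_H^0(X)=X$, $C_H^{m+1}(X)=C_H(C_H^m(X))$ and $C_H[X]=\bigcup_{m\ge 0}C_H^m(X)$. *)

From mathcomp Require Import all_boot.
Set Implicit Arguments. Unset Strict Implicit. Unset Printing Implicit Defensive.

(* A Menger system of rank n on carrier G:
   o x ys  stands for  x[ys_1 ... ys_n]   (ys : {ffun 'I_n -> G}),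
   R i x   stands for  R_{i+1} x          (indices 1..n are 'I_n = 0..n-1). *)

Section Menger.
Variables (G : Type) (n : nat).
Variable o : G -> {ffun 'I_n -> G} -> G.
Variable R : 'I_n -> G -> G.

Definition Rt (y : G) : {ffun 'I_n -> G} := [ffun i => R i y].
Definition upd (u : {ffun 'I_n -> G}) (i : 'I_n) (z : G) : {ffun 'I_n -> G} :=
  [ffun j => if j == i then z else u j].
Definition cst (y : G) : {ffun 'I_n -> G} := [ffun _ => y].

Definition functional_Menger : Prop :=
  (forall x y z, o (o x y) z = o x [ffun j => o (y j) z]) /\
  (forall x, o x (Rt x) = x) /\
  (forall x u i z y, o (o x (upd u i z)) (Rt y) = o x (upd u i (o z (Rt y)))) /\
  (forall i x y, R i (o x (Rt y)) = o (R i x) (Rt y)) /\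
  (forall x y z, o (o x (Rt y)) (Rt z) = o (o x (Rt z)) (Rt y)) /\
  (forall i k x ys, R i (o x ys) = R i (o (R k x) ys)) /\
  (forall i x ys, o (R i x) ys = o (ys i) (Rt (o x ys))).

(* Representations by partial n-place functions on A; a partial map
   A^n -> A is  {ffun 'I_n -> A} -> option A. *)
Definition is_representation (A : Type) (P : G -> {ffun 'I_n -> A} -> option A) : Prop :=
  (forall x ys (a : {ffun 'I_n -> A}) (c : A),
      P (o x ys) a = Some c <->
      exists bs : {ffun 'I_n -> A},
        (forall i, P (ys i) a = Some (bs i)) /\ P x bs = Some c) /\
  (forall i x (a : {ffun 'I_n -> A}),
      P (R i x) a = match P x a with Some _ => Some (a i) | None => None end).

Definition stabilizer (H : G -> Prop) : Prop :=
  (exists h, H h) /\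
  exists (A : Type) (P : G -> {ffun 'I_n -> A} -> option A) (a : A),
    is_representation P /\
    forall g, H g <-> P g [ffun _ => a] = Some a.

Inductive Tn : (G -> G) -> Prop :=
  | Tn_id : Tn (fun x => x)
  | Tn_sub (a : G) (b : {ffun 'I_n -> G}) (i : 'I_n) (t : G -> G) :
      Tn t -> Tn (fun x => o a (upd b i (t x)))
  | Tn_R (i : 'I_n) (t : G -> G) : Tn t -> Tn (fun x => R i (t x)).

Definition quasi_stable (H : G -> Prop) : Prop :=
  forall x, H x -> H (o x (cst x)).
Definition l_unitary (H : G -> Prop) : Prop :=
  forall x y, H (o x (cst y)) -> H y -> H x.
Definition normal_v_complex (H : G -> Prop) : Prop :=
  forall x y t, Tn t -> H x -> H y -> H (t x) -> H (t y).

Definition mle (x y : G) : Prop := x = o y (Rt x).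

Definition CH (H X : G -> Prop) (c : G) : Prop :=
  exists a b t, (mle a b \/ (H a /\ H b)) /\ Tn t /\
    o (t a) (Rt c) = t a /\ X a /\ X (t b).

Fixpoint CHm (H : G -> Prop) (m : nat) (X : G -> Prop) : G -> Prop :=
  match m with
  | 0 => X
  | m'.+1 => CH H (CHm H m' X)
  end.

Definition CHcl (H X : G -> Prop) (c : G) : Prop := exists m, CHm H m X c.

End Menger.

(* Necessity: in a representation P with stabilizer point a, the value P g (a,...,a) is
   transported along every context of T_n(G); elements of C_H[H] are defined at
   (a,...,a), and if x <= y with x defined there, then y takes the same value.
   Sufficiency: on K = C_H[H] call x, y equivalent when every context t in T_n(G)
   maps x into H iff it maps y into H, and into K iff it maps y into K.  The closure
   properties of K and the hypotheses on H make this a congruence under which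
   x <= y with x in K makes x and y equivalent.  Then g acts on tuples of classes by
   ([x_1], ..., [x_n]) |-> [g[x_1 ... x_n]] whenever g[x_1 ... x_n] lies in K; this is
   a representation and H is the stabilizer of the class of H. *)

From Stdlib Require Import ClassicalEpsilon PropExtensionality FunctionalExtensionality.
From mathcomp Require Import all_boot.
Set Implicit Arguments. Unset Strict Implicit. Unset Printing Implicit Defensive.

Section Tuples.
Variables (T : Type) (n : nat).
Implicit Types (u xs ys : {ffun 'I_n -> T}) (i : 'I_n).

Lemma upd_at u i z : upd u i z i = z.
Proof. by rewrite ffunE eqxx. Qed.

Lemma upd_self u i : upd u i (u i) = u.
Proof. by apply/ffunP=> j; rewrite ffunE; case: eqP => [->|]. Qed.

Lemma ffun_replace_ind (Q : {ffun 'I_n -> T} -> Prop) xs xs' :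
  Q xs -> (forall ys i, Q ys -> ys i = xs i -> Q (upd ys i (xs' i))) -> Q xs'.
Proof.
move=> Qxs step.
pose mix k := [ffun j : 'I_n => if (j < k)%N then xs' j else xs j].
have -> : xs' = mix n by apply/ffunP=> j; rewrite ffunE ltn_ord.
elim: n => [|k IH].
  by have -> : mix 0 = xs by apply/ffunP=> j; rewrite ffunE.
case: (ltnP k n) => [lt_kn | le_nk].
- pose k' := Ordinal lt_kn.
  have -> : mix k.+1 = upd (mix k) k' (xs' k').
    apply/ffunP=> j; rewrite !ffunE; case: eqVneq => [-> | ne_jk]; first by rewrite ltnSn.
    by move: ne_jk; rewrite ltnS leq_eqVlt -val_eqE => /negbTE ->.
  by apply: step IH _; rewrite ffunE ltnn.
- have -> : mix k.+1 = mix k.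
    by apply/ffunP=> j; rewrite !ffunE !(leq_trans (ltn_ord j)) // ltnW.
  exact: IH.
Qed.

End Tuples.

Section MengerAlgebra.
Variables (G : Type) (n : nat) (o : G -> {ffun 'I_n -> G} -> G) (R : 'I_n -> G -> G).
Hypothesis A1 : forall x y z, o (o x y) z = o x [ffun j => o (y j) z].
Hypothesis A2 : forall x, o x (Rt R x) = x.
Hypothesis A3 : forall x u i z y, o (o x (upd u i z)) (Rt R y) = o x (upd u i (o z (Rt R y))).
Hypothesis A4 : forall i x y, R i (o x (Rt R y)) = o (R i x) (Rt R y).
Hypothesis A5 : forall x y z, o (o x (Rt R y)) (Rt R z) = o (o x (Rt R z)) (Rt R y).
Hypothesis A6 : forall i k x ys, R i (o x ys) = R i (o (R k x) ys).
Hypothesis A7 : forall i x ys, o (R i x) ys = o (ys i) (Rt R (o x ys)).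

(* [dom_sub x y] is the relation x ⊏ y of the paper: in functional terms dom x ⊆ dom y. *)
Definition dom_sub x y := o x (Rt R y) = x.

Lemma R_R i k x : R i (R k x) = R i x.
Proof. by rewrite -{2}(A2 x) (A6 i k) -A4 A2. Qed.

Lemma Rt_R k x : Rt R (R k x) = Rt R x.
Proof. by apply/ffunP=> j; rewrite !ffunE R_R. Qed.

Lemma Rt_restr z c : Rt R (o z (Rt R c)) = [ffun k => o (Rt R z k) (Rt R c)].
Proof. by apply/ffunP=> j; rewrite !ffunE A4. Qed.

Lemma restr_idem x c : o (o x (Rt R c)) (Rt R c) = o x (Rt R c).
Proof.
rewrite A1; suff -> : [ffun j => o (Rt R c j) (Rt R c)] = Rt R c by [].
by apply/ffunP=> j; rewrite !ffunE -A4 A2.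
Qed.

Lemma restr_mle z c : mle o R (o z (Rt R c)) z.
Proof. by rewrite /mle Rt_restr -A1 A2. Qed.

Lemma mle_dom_sub x y : mle o R x y -> dom_sub x y.
Proof. by rewrite /mle /dom_sub => E; rewrite {1}E A5 A2 -E. Qed.

Lemma dom_sub_trans x y z : dom_sub x y -> dom_sub y z -> dom_sub x z.
Proof.
rewrite /dom_sub => xy yz; rewrite -{1}xy A1.
suff -> : [ffun j => o (Rt R y j) (Rt R z)] = Rt R y by [].
by apply/ffunP=> j; rewrite !ffunE -A4 yz.
Qed.

Lemma dom_sub_comp g ys i : dom_sub (o g ys) (ys i).
Proof.
rewrite /dom_sub; set q := o g ys.
have Rt_q : Rt R q = [ffun k => o (Rt R (ys i) k) (Rt R q)].
  by apply/ffunP=> k; rewrite !ffunE /q (A6 k i) A7 A4.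
by rewrite -{1}(A2 q) A5 A1 -Rt_q A2.
Qed.

Lemma dom_sub_restr x z : dom_sub x z -> dom_sub x (o z (Rt R x)).
Proof. by rewrite /dom_sub Rt_restr -A1 => ->; rewrite A2. Qed.

Lemma Tn_comp t s : Tn o R t -> Tn o R s -> Tn o R (fun x => t (s x)).
Proof.
move=> Tt Ts; elim: Tt => [|a b i t' _ IH|j t' _ IH]; first exact: Ts.
- exact: Tn_sub.
- exact: Tn_R.
Qed.

Lemma Tn_upd g u i : Tn o R (fun z => o g (upd u i z)).
Proof. by do 2 constructor. Qed.

Lemma Tn_mle t x y : Tn o R t -> mle o R x y -> mle o R (t x) (t y).
Proof.
move=> Tt xy; elim: Tt => [|a b i t' _ IH|j t' _ IH] //=; rewrite /mle in IH *.
- (* t' x and t' y agree on dom e, which lies inside dom (t' x). *)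
  set e := o a (upd b i (t' x)).
  have e_t'x : dom_sub e (t' x) by rewrite /e -{2}(upd_at b i (t' x)); exact: dom_sub_comp.
  have t'x_e : o (t' x) (Rt R e) = o (t' y) (Rt R e).
    rewrite {1}IH A5; apply: dom_sub_trans e_t'x; exact: restr_idem.
  by rewrite A3 -t'x_e -A3 A2.
- by rewrite Rt_R {1}IH A4.
Qed.

Section Closure.
Variables H X : G -> Prop.
Local Notation K := (CHcl o R H X).

Lemma CH_self (Y : G -> Prop) c : Y c -> CH o R H Y c.
Proof.
move=> Yc; exists c, c, (fun x => x).
by split; [left; rewrite /mle A2 | split; [exact: Tn_id | rewrite A2]].
Qed.

Lemma CHm_mono m m' c : m <= m' -> CHm o R H m X c -> CHm o R H m' X c.
Proof.
elim: m' => [|m' IH]; first by rewrite leqn0 => /eqP ->.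
by rewrite leq_eqVlt => /orP [/eqP -> //| /IH mm' /mm' /CH_self].
Qed.

Lemma CHcl_base c : X c -> K c.
Proof. by exists 0. Qed.

Lemma CHcl_closed c : CH o R H K c -> K c.
Proof.
move=> [a [b [t [ab [Tt [tac [[m1 Ka] [m2 Ktb]]]]]]]].
exists (maxn m1 m2).+1, a, b, t; do !split => //.
- by apply: CHm_mono Ka; apply: leq_maxl.
- by apply: CHm_mono Ktb; apply: leq_maxr.
Qed.

Lemma CHcl_dom_sub e c : K e -> dom_sub e c -> K c.
Proof.
move=> Ke ec; apply: CHcl_closed; exists e, e, (fun x => x).
by split; [left; rewrite /mle A2 | split; [exact: Tn_id | ]].
Qed.

Lemma CHcl_comp g ys i : K (o g ys) -> K (ys i).
Proof. by move/CHcl_dom_sub; apply; exact: dom_sub_comp. Qed.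

Lemma CHcl_mle_ctx x y t : mle o R x y -> K x -> Tn o R t -> K (t y) -> K (t x).
Proof.
move=> xy Kx Tt Kty; apply: CHcl_closed; exists x, y, t.
by split; [left | do !split => //; exact: A2].
Qed.

Lemma CHcl_H_ctx x y t : H x -> H y -> K x -> Tn o R t -> K (t y) -> K (t x).
Proof.
move=> Hx Hy Kx Tt Kty; apply: CHcl_closed; exists x, y, t.
by split; [right | do !split => //; exact: A2].
Qed.

End Closure.

Section Sufficiency.
Hypothesis hn : 0 < n.
Variable H : G -> Prop.
Local Notation K := (CHcl o R H H).
Hypotheses (QS : quasi_stable o H) (LU : l_unitary o H) (NVC : normal_v_complex o R H).
Hypothesis H_R : forall i x, H x -> H (R i x).
(* The last condition of the theorem, with a nonempty and with an empty prefix. *)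
Hypothesis H_mle_slot : forall x y u w i,
  mle o R x y -> K x -> H (o u (upd w i y)) -> H (o u (upd w i x)).
Hypothesis H_mle_top : forall x y, mle o R x y -> K x -> H y -> H x.

Lemma H_subst_cst g us h : H (o g us) -> (forall j, H (us j)) -> H h -> H (o g (cst n h)).
Proof.
move=> Hg Hus Hh; apply: (ffun_replace_ind (Q := fun ys => H (o g ys))) Hg _ => ys j Hys ysj.
rewrite ffunE; apply: (NVC (Tn_upd g ys j) (Hus j) Hh).
by rewrite -ysj upd_self.
Qed.

Lemma H_mle_up x y : mle o R x y -> H x -> H y.
Proof.
move=> xy Hx; apply: (LU (y := x)) => //.
by apply: (H_subst_cst (us := Rt R x)); rewrite -?xy // => j; rewrite ffunE; apply: H_R.
Qed.

Lemma H_mle_ctx x y t : mle o R x y -> K x -> Tn o R t -> H (t y) -> H (t x).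
Proof.
move=> xy Kx; case=> [|a b i t' Tt'|j t' Tt'] /=; first exact: H_mle_top.
- move=> Hty; have Kt'y : K (t' y).
    by have := CHcl_comp i (CHcl_base H Hty); rewrite upd_at.
  exact: H_mle_slot (Tn_mle Tt' xy) (CHcl_mle_ctx xy Kx Tt' Kt'y) Hty.
- move=> Hty; have Tt := Tn_R j Tt'.
  exact: H_mle_top (Tn_mle Tt xy) (CHcl_mle_ctx xy Kx Tt (CHcl_base H Hty)) Hty.
Qed.

Definition ctx_equiv x y :=
  K x /\ forall t, Tn o R t -> (H (t x) <-> H (t y)) /\ (K (t x) <-> K (t y)).

Lemma ctx_equiv_refl x : K x -> ctx_equiv x x.
Proof. by split. Qed.

Lemma ctx_equiv_CHcl x y : ctx_equiv x y -> K y.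
Proof. by case=> Kx /(_ _ (Tn_id o R)) [_ /= [Kxy _]]; apply: Kxy. Qed.

Lemma ctx_equiv_H x y : ctx_equiv x y -> H x -> H y.
Proof. by case=> _ /(_ _ (Tn_id o R)) [/= [Hxy _] _]. Qed.

Lemma ctx_equiv_sym x y : ctx_equiv x y -> ctx_equiv y x.
Proof.
move=> xy; split; first exact: ctx_equiv_CHcl xy.
by move=> t Tt; case: xy => _ /(_ t Tt) [Hxy Kxy]; split; symmetry.
Qed.

Lemma ctx_equiv_trans x y z : ctx_equiv x y -> ctx_equiv y z -> ctx_equiv x z.
Proof.
move=> [Kx xy] [_ yz]; split => // t Tt.
by case: (xy t Tt) (yz t Tt) => [-> ->] [-> ->].
Qed.

Lemma ctx_equiv_ctx x y s : ctx_equiv x y -> Tn o R s -> K (s x) -> ctx_equiv (s x) (s y).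
Proof. by move=> [_ xy] Ts Ksx; split => // t Tt; apply: (xy _ (Tn_comp Tt Ts)). Qed.

Lemma ctx_equiv_of_H x y : H x -> H y -> ctx_equiv x y.
Proof.
move=> Hx Hy; split=> [|t Tt]; first exact: CHcl_base.
split; split; [exact: NVC Tt Hx Hy | exact: NVC Tt Hy Hx | |];
  apply: CHcl_H_ctx Tt => //; exact: CHcl_base.
Qed.

Lemma ctx_equiv_of_mle x y : mle o R x y -> K x -> ctx_equiv x y.
Proof.
move=> xy Kx; split => // t Tt; split; split; last exact: CHcl_mle_ctx.
- by move/H_mle_up; apply; exact: Tn_mle.
- exact: H_mle_ctx.
- by move/CHcl_dom_sub; apply; apply: mle_dom_sub; exact: Tn_mle.
Qed.

Lemma ctx_equiv_args g (xs xs' : {ffun 'I_n -> G}) :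
  (forall i, ctx_equiv (xs i) (xs' i)) -> K (o g xs) -> ctx_equiv (o g xs) (o g xs').
Proof.
move=> xs_xs' Kg; apply: (ffun_replace_ind (Q := fun ys => ctx_equiv (o g xs) (o g ys))).
  exact: ctx_equiv_refl.
move=> ys j gxs_ys ysj; apply: (ctx_equiv_trans gxs_ys).
rewrite -{1}(upd_self ys j) ysj.
apply: (ctx_equiv_ctx (s := fun z => o g (upd ys j z))) (Tn_upd g ys j) _ => //.
by rewrite -ysj upd_self; exact: ctx_equiv_CHcl gxs_ys.
Qed.

(* The representation acts on the classes of [ctx_equiv] (as subsets of G). *)
Definition cls x : G -> Prop := ctx_equiv x.

Lemma cls_eq x y : ctx_equiv x y -> cls x = cls y.
Proof.
move=> xy; apply: functional_extensionality => z; apply: propositional_extensionality.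
by split=> E; [apply: ctx_equiv_trans (ctx_equiv_sym xy) E | apply: ctx_equiv_trans xy E].
Qed.

Lemma cls_inj x y : K x -> cls x = cls y -> ctx_equiv x y.
Proof. by move=> Kx xy; apply: ctx_equiv_sym; rewrite -/(cls y x) -xy; exact: ctx_equiv_refl. Qed.

Definition coords (s : {ffun 'I_n -> G -> Prop}) (xs : {ffun 'I_n -> G}) :=
  forall i, K (xs i) /\ s i = cls (xs i).

Definition act_graph g s c := exists xs, coords s xs /\ K (o g xs) /\ c = cls (o g xs).

Lemma act_graph_coords g s c xs :
  act_graph g s c -> coords s xs -> K (o g xs) /\ c = cls (o g xs).
Proof.
move=> [xs' [s_xs' [Kgxs' ->]]] s_xs.
have xs'_xs i : ctx_equiv (xs' i) (xs i).
  have [[Kxs' E'] [_ E]] := (s_xs' i, s_xs i).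
  by apply: cls_inj Kxs' _; rewrite -E' E.
have gxs'_gxs := ctx_equiv_args xs'_xs Kgxs'.
by split; [exact: ctx_equiv_CHcl gxs'_gxs | exact: cls_eq].
Qed.

Lemma act_graph_functional g s c c' : act_graph g s c -> act_graph g s c' -> c = c'.
Proof. by move=> gc [xs [s_xs [_ ->]]]; have [_ ->] := act_graph_coords gc s_xs. Qed.

Definition act g s : option (G -> Prop) :=
  match excluded_middle_informative (exists c, act_graph g s c) with
  | left e => Some (proj1_sig (constructive_indefinite_description _ e))
  | right _ => None
  end.

Lemma actP g s c : act g s = Some c <-> act_graph g s c.
Proof.
rewrite /act; case: excluded_middle_informative => [e|ne].
  case: constructive_indefinite_description => c0 gc0 /=.
  by split=> [[<-] //|gc]; rewrite (act_graph_functional gc0 gc).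
by split=> // gc; case: ne; exists c.
Qed.

Lemma act_comp x ys s c :
  act (o x ys) s = Some c <->
  exists bs : {ffun _}, (forall i, act (ys i) s = Some (bs i)) /\ act x bs = Some c.
Proof.
split.
- move/actP=> [xs [s_xs]]; rewrite A1; set zs := [ffun j => o (ys j) xs] => -[Kxzs ->].
  have Kzs j : K (zs j) by exact: CHcl_comp Kxzs.
  exists [ffun j => cls (zs j)]; split.
    by move=> i; apply/actP; exists xs; move: (Kzs i); rewrite !ffunE.
  by apply/actP; exists zs; split=> // i; split; [exact: Kzs | rewrite ffunE].
- case=> bs [ys_bs /actP x_bs].
  have [xs s_xs] : exists xs, coords s xs.
    by have /actP [xs [s_xs _]] := ys_bs (Ordinal hn); exists xs.
  pose zs := [ffun j => o (ys j) xs].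
  have bs_zs : coords bs zs.
    move=> i; rewrite ffunE.
    by have [Kzi ->] := act_graph_coords ((actP _ _ _).1 (ys_bs i)) s_xs.
  have [Kxzs ->] := act_graph_coords x_bs bs_zs.
  by apply/actP; exists xs; rewrite A1.
Qed.

Lemma act_R i x s : act (R i x) s = if act x s is Some _ then Some (s i) else None.
Proof.
case E: (act x s) => [c|].
- have /actP [xs [s_xs [Kxxs _]]] := E.
  apply/actP; exists xs; split=> //; rewrite A7.
  have [Kxsi ->] := s_xs i; set q := o x xs.
  have Kr : K (o (xs i) (Rt R q)).
    by apply: CHcl_dom_sub Kxxs _; apply: dom_sub_restr; exact: dom_sub_comp.
  by split=> //; apply/esym/cls_eq/ctx_equiv_of_mle => //; exact: restr_mle.
- case E': (act (R i x) s) => [c|] //.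
  have /actP [xs [s_xs [Kr _]]] := E'.
  have Kxxs : K (o x xs) by rewrite A7 in Kr; apply: CHcl_dom_sub Kr _; exact: restr_idem.
  suff : act x s = Some (cls (o x xs)) by rewrite E.
  by apply/actP; exists xs.
Qed.

Lemma act_representation : is_representation o R act.
Proof. by split; [exact: act_comp | exact: act_R]. Qed.

Lemma act_stabilizer h0 g : H h0 -> H g <-> act g (cst n (cls h0)) = Some (cls h0).
Proof.
move=> Hh0; split=> [Hg | /actP [xs [h0_xs [Kgxs h0_gxs]]]].
- apply/actP; exists (cst n g); split; first by move=> i; rewrite !ffunE; split;
    [exact: CHcl_base | exact/cls_eq/ctx_equiv_of_H].
  split; [exact/CHcl_base/QS | exact/cls_eq/ctx_equiv_of_H/QS].
- have xs_h0 i : ctx_equiv (xs i) (cst n h0 i).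
    have [Kxsi E] := h0_xs i; rewrite ffunE in E; rewrite ffunE.
    by apply/ctx_equiv_sym/cls_inj => //; exact: CHcl_base.
  have Hgxs : H (o g xs) by apply/(ctx_equiv_H _ Hh0)/cls_inj => //; exact: CHcl_base.
  exact: LU (ctx_equiv_H (ctx_equiv_args xs_h0 Kgxs) Hgxs) Hh0.
Qed.

End Sufficiency.

End MengerAlgebra.

Lemma option_ext (T : Type) (u v : option T) : (forall c, u = Some c <-> v = Some c) -> u = v.
Proof.
case: u => [c|]; case: v => [d|] // uv.
- exact/esym/(uv c).
- by have := (uv c).1 erefl.
- by have := (uv d).2 erefl.
Qed.

Section Necessity.
Variables (G : Type) (n : nat) (o : G -> {ffun 'I_n -> G} -> G) (R : 'I_n -> G -> G).
Variables (A : Type) (P : G -> {ffun 'I_n -> A} -> option A) (a : A).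
Hypothesis hn : 0 < n.
Hypothesis P_repr : is_representation o R P.
Variable H : G -> Prop.
Hypothesis H_stab : forall g, H g <-> P g [ffun _ => a] = Some a.

Local Notation Pa g := (P g [ffun _ => a]).

Lemma Tn_val t x y : Tn o R t -> Pa x = Pa y -> Pa (t x) = Pa (t y).
Proof.
move=> Tt xy; elim: Tt => [|b bs i t' _ IH|j t' _ IH] //=.
- apply: option_ext => c; rewrite !P_repr.1.
  by split=> -[cs [bs_cs b_cs]]; exists cs; split=> // j; rewrite -bs_cs !ffunE; case: eqP.
- by rewrite !P_repr.2 IH.
Qed.

Lemma mle_val x y : mle o R x y -> Pa x <> None -> Pa y = Pa x.
Proof.
case E: (Pa x) => [c|] // xy _.
have /P_repr.1 [cs [Rx_cs y_cs]] : P (o y (Rt R x)) [ffun _ => a] = Some c by rewrite -xy.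
suff cs_a : cs = [ffun _ => a] by rewrite -cs_a.
by apply/ffunP => j; move: (Rx_cs j); rewrite ffunE P_repr.2 E ffunE => -[].
Qed.

Lemma CHm_val_defined m c : CHm o R H m H c -> Pa c <> None.
Proof.
elim: m c => [|m IH] c /=; first by move/H_stab ->.
move=> [x [y [t [xy [Tt [tx_c [Kx Kty]]]]]]].
have xy_Pa : Pa x = Pa y.
  case: xy => [xy | [/H_stab -> /H_stab ->] //].
  by rewrite (mle_val xy (IH _ Kx)).
have : Pa (o (t x) (Rt R c)) <> None by rewrite tx_c (Tn_val Tt xy_Pa); exact: IH.
case E: (Pa (o (t x) (Rt R c))) => [d|] // _.
move: E => /P_repr.1 [cs [Rc_cs _]].
by move: (Rc_cs (Ordinal hn)); rewrite ffunE P_repr.2; case: (Pa c).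
Qed.

Lemma stabilizer_conditions :
  quasi_stable o H /\ l_unitary o H /\ normal_v_complex o R H /\
  (forall i x, H x -> H (R i x)) /\
  (forall (x y u : G) (w : {ffun 'I_n -> G}) (i : 'I_n),
     x = o y (Rt R x) -> CHcl o R H H x ->
     (H (o u (upd w i y)) -> H (o u (upd w i x))) /\ (H y -> H x)).
Proof.
split; [|split; [|split; [|split]]].
- move=> x /H_stab Hx; apply/H_stab/P_repr.1.
  by exists [ffun _ => a]; split=> [j|//]; rewrite !ffunE.
- move=> x y /H_stab /P_repr.1 [cs [y_cs x_cs]] /H_stab Hy; apply/H_stab.
  suff cs_a : cs = [ffun _ => a] by rewrite -cs_a.
  by apply/ffunP=> j; move: (y_cs j); rewrite !ffunE Hy => -[].
- move=> x y t Tt /H_stab Hx /H_stab Hy /H_stab Htx; apply/H_stab.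
  by rewrite -(Tn_val Tt (x := x)) // Hx Hy.
- by move=> i x /H_stab Hx; apply/H_stab; rewrite P_repr.2 Hx ffunE.
- move=> x y u w i xy [m Kx]; have y_x := mle_val xy (CHm_val_defined Kx).
  split=> /H_stab Hy; apply/H_stab; rewrite -Hy //.
  by apply: (Tn_val (Tn_upd o R u w i)); rewrite y_x.
Qed.

End Necessity.

Theorem theorem2 (G : Type) (n : nat) (hn : 0 < n)
  (o : G -> {ffun 'I_n -> G} -> G) (R : 'I_n -> G -> G)
  (HM : functional_Menger o R)
  (H : G -> Prop) (Hne : exists h, H h) :
  stabilizer o R H <->
  (quasi_stable o H /\ l_unitary o H /\ normal_v_complex o R H /\
   (forall i x, H x -> H (R i x)) /\
   (forall (x y u : G) (w : {ffun 'I_n -> G}) (i : 'I_n),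
      x = o y (Rt R x) -> CHcl o R H H x ->
      (H (o u (upd w i y)) -> H (o u (upd w i x))) /\ (H y -> H x))).
Proof.
have [A1 [A2 [A3 [A4 [A5 [A6 A7]]]]]] := HM.
split=> [[_ [A [P [a [P_repr H_stab]]]]] | [QS [LU [NVC [H_R H_mle]]]]].
  exact: (stabilizer_conditions hn P_repr H_stab).
have H_mle_slot x y u w i xy Kx := (H_mle x y u w i xy Kx).1.
have H_mle_top x y xy Kx := (H_mle x y x (Rt R x) (Ordinal hn) xy Kx).2.
have [h0 Hh0] := Hne.
split=> //; exists (G -> Prop), (act o R H), (cls o R H h0); split.
  exact: (act_representation A1 A2 A3 A4 A5 A6 A7 hn LU NVC H_R H_mle_slot H_mle_top).
by move=> g; apply: (act_stabilizer A2 QS LU NVC).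
Qed.
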